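(* In the deterministic $\mathsf{CD}$ model, deterministic $\mathsf{SR}$-communication with messages in $\{1,\ldots,M\}$ can be solved in $O(\min\{M,N\})$ time using $O(\min\{\log M,\log N\})$ energy.
   Context: Radio network: connected undirected graph; synchronized slots; each vertex transmits, listens or idles per slot, transmit/listen costing one unit of energy (energy = maximum per-vertex number of such slots). $\mathsf{CD}$: a listener receives the message if exactly one neighbor transmits, hears silence if none, and noise (distinguishable from silence) if at least two. Deterministic setting: vertices have distinct IDs in $\{1,\ldots,N\}$. $N^+(v)=N(v)\cup\{v\}$. Deterministic $\mathsf{SR}$-communication: given two (not necessarily disjoint) vertex sets $S$ and $R$, each $u\in S$ has a message $m_u\in\{1,\ldots,M\}$, and the goal is that every $v\in R$ with $N^+(v)\cap S\neq\emptyset$ learns $m_u$ for some $u\in N^+(v)\cap S$. *)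

From mathcomp Require Import all_boot.
Set Implicit Arguments. Unset Strict Implicit. Unset Printing Implicit Defensive.

Inductive action := Transmit of nat | Listen | Idle.

(* What a vertex observes in one slot: [NoFb] when it did not listen;
   a listener hears [Silence] (no transmitting neighbour), [Recv x]
   (exactly one transmitting neighbour, sending x) or [Noise] (>= 2). *)
Inductive feedback := NoFb | Silence | Noise | Recv of nat.

(* A deterministic protocol (for fixed, globally known N and M).
   A vertex's local knowledge: its ID, its S-input ([Some m_u] if u \in S,
   [None] otherwise), whether it is in R, and its history of feedbacks.
   [rounds] is the number of slots (the time complexity). *)
Record protocol := Protocol {
  rounds : nat;
  act : nat -> option nat -> bool -> seq feedback -> action;
  output : nat -> option nat -> bool -> seq feedback -> nat
}.

Definition is_active (a : action) : bool :=
  if a is Idle then false else true.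

Section Execution.
Variables (P : protocol) (V : finType) (adj : rel V) (id : V -> nat)
          (S R : {set V}) (m : V -> nat).

Definition sinput (v : V) : option nat := if v \in S then Some (m v) else None.

Definition action_of (h : V -> seq feedback) (v : V) : action :=
  act P (id v) (sinput v) (v \in R) (h v).

Definition tx_packet (a : action) : option nat :=
  if a is Transmit x then Some x else None.

Definition slot_feedback (h : V -> seq feedback) (v : V) : feedback :=
  match action_of h v with
  | Listen =>
      match [seq tx_packet (action_of h u) | u <- enum V &
               adj v u && (tx_packet (action_of h u) != None)] with
      | [::] => Silence
      | [:: Some x] => Recv x
      | [:: None] => Silence (* impossible *)
      | _ => Noise
      end
  | _ => NoFb
  end.

Fixpoint hist (t : nat) : V -> seq feedback :=
  match t with
  | 0 => fun _ => [::]
  | t'.+1 => let h := hist t' in fun v => rcons (h v) (slot_feedback h v)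
  end.

Definition energy (v : V) : nat :=
  \sum_(t < rounds P) is_active (action_of (hist t) v).

Definition final_output (v : V) : nat :=
  output P (id v) (sinput v) (v \in R) (hist (rounds P) v).

Definition closed_nbhd (v : V) : {set V} := [set u | (u == v) || adj v u].

Definition SR_solved : Prop :=
  forall v, v \in R -> (exists u, u \in closed_nbhd v :&: S) ->
    exists2 u, u \in closed_nbhd v :&: S & final_output v = m u.

End Execution.

Definition valid_instance (N M : nat) (V : finType) (adj : rel V) (id : V -> nat)
  (S : {set V}) (m : V -> nat) : Prop :=
  [/\ symmetric adj, irreflexive adj, (forall u v, connect adj u v)
    & [/\ injective id, (forall v, 1 <= id v <= N)
         & (forall u, u \in S -> 1 <= m u <= M)]].

From Pilot Require Import Defs.
From mathcomp Require Import all_boot zify.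
Set Implicit Arguments. Unset Strict Implicit. Unset Printing Implicit Defensive.

(* Let L := up_log 2 (minn M N) and give every sender a key k < 2^L: its message
   minus one if M <= N, its ID minus one otherwise.  The slots 1 .. 2^(L+1) - 1 are
   the nodes of the complete binary tree in heap order, and a sender transmits in
   the slots of the ancestors of its leaf 2^L + k, i.e. L + 1 times.  A receiver
   walks down from the root, listening at both children of its current node and
   moving to the left child iff someone transmitted there; it thus reaches the
   leaf of the smallest key among its neighbouring senders after 2L listenings.
   That leaf determines the message if M <= N; otherwise the key is an ID, so the
   corresponding sender is alone in transmitting at the leaf and is heard there. *)

Definition on_path (L k t : nat) : bool := [exists j : 'I_L.+1, t == (2^L + k) %/ 2^j].

Lemma ancestor_range L k j : k < 2^L -> j <= L ->
  2^(L - j) <= (2^L + k) %/ 2^j < 2^(L - j).+1.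
Proof.
move=> k_lt j_le; have pos : 0 < 2^j by rewrite expn_gt0.
rewrite leq_divRL // ltn_divLR // -!expnD.
have -> : L - j + j = L by lia.
have -> : (L - j).+1 + j = L.+1 by lia.
rewrite expnS; lia.
Qed.

Lemma on_path_depth L k e t : k < 2^L -> e <= L -> 2^e <= t < 2^e.+1 ->
  on_path L k t = (t == (2^L + k) %/ 2^(L - e)).
Proof.
move=> k_lt e_le t_depth; apply/existsP/eqP => [[j /eqP t_anc] | ->].
  have j_le : j <= L by rewrite -ltnS.
  have := trunc_log_eq (isT : 1 < 2) t_depth.
  rewrite t_anc (trunc_log_eq (isT : 1 < 2) (ancestor_range k_lt j_le)) => <-.
  by congr (_ %/ 2 ^ _); lia.
by exists (inord (L - e)); rewrite inordK // ltnS leq_subr.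
Qed.

Fixpoint descend (occupied : pred nat) (d : nat) : nat :=
  if d is d'.+1 then
    let n := descend occupied d' in if occupied (2 * n) then 2 * n else (2 * n).+1
  else 1.

Lemma descend_range occ d : 2^d <= descend occ d < 2^d.+1.
Proof. by elim: d => [|d IH] //=; move: IH; rewrite !expnS; case: ifP; lia. Qed.

Lemma descend_ext occ1 occ2 d :
  (forall t, t < 2^d.+1 -> occ1 t = occ2 t) -> descend occ1 d = descend occ2 d.
Proof.
elim: d => [|d IH] //= occE.
rewrite IH => [|t t_lt]; last by apply: occE; rewrite expnS; lia.
by rewrite occE //; have := descend_range occ2 d; rewrite !expnS; lia.
Qed.

Section MinLeafDescent.

Variables (L : nat) (I : finType) (A : {pred I}) (key : I -> nat) (occ : pred nat) (u0 : I).
Hypotheses (A_u0 : u0 \in A) (key_min : forall u, u \in A -> key u0 <= key u).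
Hypothesis key_lt : forall u, u \in A -> key u < 2^L.
Hypothesis occE : forall d, d < L ->
  occ (2 * descend occ d) = [exists u in A, on_path L (key u) (2 * descend occ d)].

Lemma descend_min_leaf d : d <= L -> descend occ d = (2^L + key u0) %/ 2^(L - d).
Proof.
elim: d => [|d IH] d_le.
  have := ancestor_range (key_lt A_u0) (leqnn L).
  by rewrite subnn /= expn0 expn1 subn0; lia.
set X := 2^L + key u0; set n := descend occ d.
have {IH} : n = X %/ 2^(L - d.+1) %/ 2.
  by rewrite /n IH 1?ltnW // -divnMA -expnSr subnSK.
set y := X %/ _ => n_half.
have n_depth := descend_range occ d; rewrite -/n in n_depth.
have child_depth : 2^d.+1 <= 2 * n < 2^d.+2.
  by move: n_depth; rewrite !expnS; lia.
have onE u : u \in A -> on_path L (key u) (2 * n) = (2 * n == (2^L + key u) %/ 2^(L - d.+1)).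
  by move=> Au; exact: on_path_depth (key_lt Au) d_le child_depth.
rewrite /= -/n occE //; case: existsP => [[u /andP[Au]] | none].
  rewrite onE // => /eqP on_u.
  have : y <= 2 * n by rewrite on_u leq_div2r // leq_add2l key_min.
  lia.
have : y != 2 * n.
  by apply/eqP => y_eq; apply: none; exists u0; rewrite -/n A_u0 onE // -y_eq eqxx.
lia.
Qed.

End MinLeafDescent.

Lemma sum_exists_leq T n (P : nat -> 'I_n -> bool) :
  \sum_(t < T) [exists j, P t j] <= \sum_(j < n) \sum_(t < T) P t j.
Proof.
rewrite exchange_big leq_sum // => t _.
by case: existsP => [[j Pj] | //]; rewrite (bigD1 j) //= Pj.
Qed.

Lemma sum_eq_leq1 T a : \sum_(t < T) (t == a :> nat) <= 1.
Proof.
elim: T => [|T IH]; first by rewrite big_ord0.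
rewrite big_ord_recr /=; case: (eqVneq T a) => [-> | _]; last by rewrite addn0.
by rewrite big1 // => t _; rewrite (ltn_eqF (ltn_ord t)).
Qed.

Lemma sum_half_eq_leq2 T a : \sum_(t < T) (t %/ 2 == a) <= 2.
Proof.
apply: (@leq_trans (\sum_(t < T) ((t == 2 * a :> nat) + (t == (2 * a).+1 :> nat)))).
  by apply: leq_sum => t _; do 3 case: eqP => //; lia.
by rewrite big_split; apply: (leq_add (sum_eq_leq1 _ _) (sum_eq_leq1 _ _)).
Qed.

Definition nonsilent (f : feedback) : bool := if f is Silence then false else true.

Section ExecutionFacts.

Variables (P : protocol) (V : finType) (adj : rel V) (id : V -> nat)
          (S R : {set V}) (m : V -> nat).
Local Notation action_of := (action_of P id S R m).
Local Notation slot_feedback := (slot_feedback P adj id S R m).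
Local Notation hist := (hist P adj id S R m).

Definition transmitting (h : V -> seq feedback) (u : V) : bool :=
  tx_packet (action_of h u) != None.

Lemma hist_mkseq t v : hist t v = mkseq (fun s => slot_feedback (hist s) v) t.
Proof. by elim: t => [|t IH] //=; rewrite IH mkseqS. Qed.

Lemma size_hist t v : size (hist t v) = t.
Proof. by rewrite hist_mkseq size_mkseq. Qed.

Lemma nonsilent_feedback h v : action_of h v = Listen ->
  nonsilent (slot_feedback h v) = [exists u, adj v u && transmitting h u].
Proof.
rewrite /Defs.slot_feedback => ->.
set X := filter _ (enum V); case X_eq: X => [|u s].
  apply/esym/negbTE/existsP => -[u u_tx].
  have : u \in X by rewrite mem_filter mem_enum andbT.
  by rewrite X_eq.
have : u \in X by rewrite X_eq mem_head.
rewrite mem_filter => /andP[u_tx _]; have -> : [exists u, adj v u && transmitting h u].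
  by apply/existsP; exists u.
by move: u_tx => /andP[_]; case: s X_eq => [|? ?] _ /=; case: tx_packet.
Qed.

Lemma slot_feedback_Recv h v u0 x : action_of h v = Listen -> adj v u0 ->
  tx_packet (action_of h u0) = Some x ->
  (forall u, adj v u -> transmitting h u -> u = u0) -> slot_feedback h v = Recv x.
Proof.
rewrite /Defs.slot_feedback => -> adj_u0 tx_u0 unique.
rewrite (eq_filter (a2 := pred1 u0)) => [|u /=].
  by rewrite filter_pred1_uniq ?enum_uniq ?mem_enum //= tx_u0.
apply/andP/eqP => [[adj_u tx_u] | ->]; first exact: unique.
by rewrite adj_u0 tx_u0.
Qed.

End ExecutionFacts.

Definition depth (N M : nat) : nat := up_log 2 (minn M N).

Lemma depth_gt0 N M : 1 < N -> 1 < M -> 0 < depth N M.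
Proof. by move=> N_gt1 M_gt1; rewrite up_log_gt0 /=; lia. Qed.

Lemma up_log_minn p a b : up_log p (minn a b) = minn (up_log p a) (up_log p b).
Proof.
case: (leqP a b) => [le_ab | /ltnW le_ba].
  by rewrite (minn_idPl (leq_up_log p le_ab)).
by rewrite (minn_idPr (leq_up_log p le_ba)).
Qed.

Lemma exp2S_up_log_leq K : 1 < K -> 2 ^ (up_log 2 K).+1 <= 4 * K.
Proof.
move=> K_gt1; have := up_log_gtn (isT : 1 < 2) K_gt1.
have : 0 < up_log 2 K by rewrite up_log_gt0.
case: (up_log 2 K) => [|l] //= _; rewrite !expnS; lia.
Qed.

Definition key (N M id x : nat) : nat := if M <= N then x.-1 else id.-1.

Definition walk_node (h : seq feedback) : nat -> nat :=
  descend (fun t => nonsilent (nth NoFb h t)).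

Definition tree_protocol (N M : nat) : protocol :=
  let L := depth N M in
  Protocol (2 ^ L.+1)
    (fun i s inR h => match s with
      | Some x => if on_path L (key N M i x) (size h) then Transmit x else Idle
      | None => if inR && [exists d : 'I_L, size h %/ 2 == walk_node h d]
                then Listen else Idle
      end)
    (fun i s inR h => match s with
      | Some x => x
      | None => let leaf := walk_node h L in
                if M <= N then (leaf - 2 ^ L).+1
                else if nth NoFb h leaf is Recv x then x else 0
      end).

Section TreeProtocol.

Variables (N M : nat) (V : finType) (adj : rel V) (id : V -> nat)
          (S R : {set V}) (m : V -> nat).
Local Notation L := (depth N M).
Local Notation P := (tree_protocol N M).
Local Notation action_of := (action_of P id S R m).
Local Notation slot_feedback := (slot_feedback P adj id S R m).
Local Notation hist := (hist P adj id S R m).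

Definition sender_key (u : V) : nat := key N M (id u) (m u).

Definition walk (d : nat) (v : V) : nat :=
  descend (fun t => nonsilent (slot_feedback (hist t) v)) d.

Lemma tx_packet_tree t u : tx_packet (action_of (hist t) u) =
  if (u \in S) && on_path L (sender_key u) t then Some (m u) else None.
Proof.
rewrite /Defs.action_of /sinput /= size_hist.
by case: (u \in S) => /=; [case: on_path | case: (_ && _)].
Qed.

Lemma transmitting_tree t u :
  transmitting P id S R m (hist t) u = (u \in S) && on_path L (sender_key u) t.
Proof. by rewrite /transmitting tx_packet_tree; case: (_ && _). Qed.

Lemma walk_node_hist t d v : 2^d.+1 <= t -> walk_node (hist t v) d = walk d v.
Proof. by move=> t_ge; apply: descend_ext => s s_lt; rewrite hist_mkseq nth_mkseq //; lia. Qed.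

Lemma half_eq_walk_node t d v :
  (t %/ 2 == walk_node (hist t v) d) = (t %/ 2 == walk d v).
Proof.
have [t_lt | t_ge] := ltnP t (2^d.+1); last by rewrite walk_node_hist.
have half_lt : t %/ 2 < 2^d by rewrite ltn_divLR // -expnSr.
have := descend_range (fun s => nonsilent (nth NoFb (hist t v) s)) d.
have := descend_range (fun s => nonsilent (slot_feedback (hist s) v)) d.
rewrite /walk_node /walk; lia.
Qed.

Lemma action_receiver t v : v \notin S -> v \in R -> action_of (hist t) v =
  if [exists d : 'I_L, t %/ 2 == walk d v] then Listen else Idle.
Proof.
move=> /negbTE vS vR; rewrite /Defs.action_of /sinput vS vR /= size_hist.
by under eq_existsb do rewrite half_eq_walk_node.
Qed.

Lemma energy_tree_protocol v : energy P adj id S R m v <= (2 * L).+1.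
Proof.
rewrite /energy [rounds _]/=; case vS: (v \in S).
  have active t : is_active (action_of (hist t) v) = on_path L (sender_key v) t.
    by rewrite /Defs.action_of /sinput vS /= size_hist; case: on_path.
  under eq_bigr do rewrite active.
  apply: leq_trans (sum_exists_leq _ (fun t j => t == (2^L + sender_key v) %/ 2^j)) _.
  apply: (@leq_trans (\sum_(j < L.+1) 1)); last by rewrite sum1_card card_ord; lia.
  by apply: leq_sum => j _; apply: sum_eq_leq1.
case vR: (v \in R); last by rewrite big1 // => t _; rewrite /Defs.action_of /sinput vS vR.
have active t : is_active (action_of (hist t) v) = [exists d : 'I_L, t %/ 2 == walk d v].
  by rewrite action_receiver ?vS //; case: ifP.
under eq_bigr do rewrite active.
apply: leq_trans (sum_exists_leq _ (fun t (d : 'I_L) => t %/ 2 == walk d v)) _.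
apply: (@leq_trans (\sum_(j < L) 2)); last by rewrite sum_nat_const card_ord; lia.
by apply: leq_sum => j _; apply: sum_half_eq_leq2.
Qed.

Hypotheses (N_ge2 : 2 <= N) (M_ge2 : 2 <= M) (valid : valid_instance N M adj id S m).

Lemma sender_key_lt u : u \in S -> sender_key u < 2^L.
Proof.
case: valid => _ _ _ [_ id_range m_range] uS.
have := up_logP (minn M N) (isT : 1 < 2); have := id_range u; have := m_range u uS.
by rewrite /sender_key /key /depth; case: (leqP M N); lia.
Qed.

Section Receiver.

Variables (v u0 : V).
Hypotheses (vS : v \notin S) (vR : v \in R) (adj_u0 : adj v u0) (u0S : u0 \in S).
Hypothesis u0_min : forall u, adj v u -> u \in S -> sender_key u0 <= sender_key u.

Lemma walk_min_leaf d : d <= L -> walk d v = (2^L + sender_key u0) %/ 2^(L - d).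
Proof.
apply: (@descend_min_leaf _ _ [pred u | adj v u && (u \in S)]).
- by rewrite inE adj_u0.
- by move=> u /andP[]; apply: u0_min.
- by move=> u /andP[_]; apply: sender_key_lt.
move=> e e_lt; set t := 2 * _.
have listening : action_of (hist t) v = Listen.
  rewrite action_receiver //; case: existsP => // -[].
  by exists (Ordinal e_lt); rewrite mulKn.
rewrite nonsilent_feedback //; apply: eq_existsb => u.
by rewrite transmitting_tree inE andbA.
Qed.

Lemma leaf_feedback : N < M ->
  slot_feedback (hist (2^L + sender_key u0)) v = Recv (m u0).
Proof.
move=> NM; set X := 2^L + sender_key u0.
have X_depth : 2^L <= X < 2^L.+1 by have := sender_key_lt u0S; rewrite expnS; lia.
have on_leaf u : u \in S -> on_path L (sender_key u) X = (X == 2^L + sender_key u).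
  by move=> uS; rewrite (on_path_depth (sender_key_lt uS) (leqnn L) X_depth) subnn divn1.
have listening : action_of (hist X) v = Listen.
  rewrite action_receiver //; case: existsP => // -[].
  have L_pred : L.-1 < L by rewrite ltn_predL depth_gt0.
  exists (Ordinal L_pred) => /=; rewrite walk_min_leaf ?leq_pred //.
  by rewrite (_ : L - L.-1 = 1) //; have := depth_gt0; lia.
apply: slot_feedback_Recv listening adj_u0 _ _.
  by rewrite tx_packet_tree u0S on_leaf // eqxx.
move=> u _; rewrite transmitting_tree => /andP[uS]; rewrite on_leaf // eqn_add2l.
case: valid => _ _ _ [id_inj id_range _].
have := id_range u; have := id_range u0.
rewrite /sender_key /key (leqNgt M N) NM /= => ? ? /eqP key_eq.
by apply: id_inj; lia.
Qed.

End Receiver.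

Lemma tree_protocol_solves : SR_solved P adj id S R m.
Proof.
move=> v vR [u /setIP[]]; rewrite /closed_nbhd inE.
case vS: (v \in S).
  by exists v; rewrite ?inE ?eqxx ?vS // /final_output /sinput vS.
move=> /predU1P[-> | adj_u] uS; first by rewrite uS in vS.
have nbr_u : adj v u && (u \in S) by rewrite adj_u uS.
case: (@arg_minnP _ u [pred w | adj v w && (w \in S)] sender_key nbr_u).
move=> u0 /andP[adj_u0 u0S] u0_min.
have {}u0_min w : adj v w -> w \in S -> sender_key u0 <= sender_key w.
  by move=> adj_w wS; apply: u0_min; rewrite inE adj_w.
exists u0; first by rewrite !inE adj_u0 orbT.
have walk_L := walk_min_leaf (negbT vS) vR adj_u0 u0S u0_min (leqnn L).
rewrite subnn divn1 in walk_L.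
rewrite /final_output /sinput vS /= walk_node_hist // walk_L.
case: leqP => MN.
  case: valid => _ _ _ [_ _ m_range]; have := m_range u0 u0S.
  by rewrite /sender_key /key MN; lia.
rewrite hist_mkseq nth_mkseq; last by have := sender_key_lt u0S; rewrite expnS; lia.
by rewrite (leaf_feedback (negbT vS) vR adj_u0 u0S u0_min MN).
Qed.

End TreeProtocol.

Theorem lemma14 :
  exists c : nat, forall N M : nat, 2 <= N -> 2 <= M ->
    exists P : protocol,
      rounds P <= c * minn M N /\
      forall (V : finType) (adj : rel V) (id : V -> nat) (S R : {set V}) (m : V -> nat),
        valid_instance N M adj id S m ->
        (forall v, energy P adj id S R m v <= c * minn (up_log 2 M) (up_log 2 N)) /\
        SR_solved P adj id S R m.
Proof.
exists 4 => N M N_ge2 M_ge2; exists (tree_protocol N M); split.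
  by apply: exp2S_up_log_leq; lia.
move=> V adj id S R m valid; split; last exact: tree_protocol_solves.
move=> v; rewrite -up_log_minn -/(depth N M).
have := energy_tree_protocol N M adj id S R m v.
have := depth_gt0 N_ge2 M_ge2; lia.
Qed.
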